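(* For every Markov chain with positive equilibrium $P^*$ and every probability distribution $P^0$, the velocity vector $\frac{dP}{dt}\big|_{P=P^0}$ given by its Kolmogorov equation is a linear combination with non-negative coefficients of the vectors $\frac{dP}{dt}\big|_{P=P^0}$ of the two-state reversible chains $A_i\rightleftharpoons A_j$ ($i\ne j$) with equilibrium $P^*$, i.e. of the vectors $\bigl(\frac{p^0_j}{p^*_j}-\frac{p^0_i}{p^*_i}\bigr)\gamma^{ji}$, $1\le j<i\le n$. (The coefficients may depend on $P^0$.) Consequently, for every $P^0$ the set of all vectors $\frac{dP}{dt}\big|_{P=P^0}$ over all Markov chains with equilibrium $P^*$ equals the set of such vectors over all chains with detailed balance and equilibrium $P^*$, namely the cone $\mathbf{Q}(P^0,P^* )$.
   Context: Fix $n\ge 2$ and $P^*=(p^*_i)$ with $p^*_i>0$, $\sum_i p^*_i=1$. A Markov chain is given by rate constants $q_{ij}\ge 0$ ($i\ne j$) with Kolmogorov equation $\frac{dp_i}{dt}=\sum_{j\ne i}(q_{ij}p_j-q_{ji}p_i)$; it has equilibrium $P^*$ if $\sum_{j\ne i}q_{ij}p^*_j=\bigl(\sum_{j\ne i}q_{ji}\bigr)p^*_i$ for all $i$. The two-state chain $A_i\rightleftharpoons A_j$ with equilibrium $P^*$ has only nonzero rates $q_{ji}=1/p^*_i$, $q_{ij}=1/p^*_j$. It has detailed balance if $q_{ij}p^*_j=q_{ji}p^*_i$ for all $i\ne j$. For $i\neq j$, $\gamma^{ji}$ is the vector with $\gamma^{ji}_j=-1$, $\gamma^{ji}_i=1$,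 other coordinates $0$; ${\rm cone}$ denotes non-negative linear combinations; ${\rm sign}$ is the three-valued sign function; $\mathbf{Q}(P,P^* )={\rm cone}\{\gamma^{ji}\,{\rm sign}(\tfrac{p_j}{p^*_j}-\tfrac{p_i}{p^*_i}) : 1\le j<i\le n\}$. *)

From HB Require Import structures.
From mathcomp Require Import all_boot all_order all_algebra.
Set Implicit Arguments. Unset Strict Implicit. Unset Printing Implicit Defensive.
Import Order.TTheory GRing.Theory Num.Theory.
Local Open Scope ring_scope.

Section Defs.
Variables (R : realFieldType) (n : nat).

(* Vectors P = (p_1..p_n) are row vectors 'rV[R]_n; p_i is [p ord0 i].
   Rate constants q_{ij} (i <> j) are the entries [q i j] of an n x n matrix;
   the diagonal is ignored. *)

Definition is_rates (q : 'M[R]_n) : Prop :=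
  forall i j : 'I_n, i != j -> 0 <= q i j.

Definition kolm (q : 'M[R]_n) (p : 'rV[R]_n) : 'rV[R]_n :=
  \row_i \sum_(j < n | j != i) (q i j * p ord0 j - q j i * p ord0 i).

Definition has_equil (q : 'M[R]_n) (ps : 'rV[R]_n) : Prop :=
  forall i : 'I_n,
    \sum_(j < n | j != i) q i j * ps ord0 j = (\sum_(j < n | j != i) q j i) * ps ord0 i.

Definition detailed_balance (q : 'M[R]_n) (ps : 'rV[R]_n) : Prop :=
  forall i j : 'I_n, i != j -> q i j * ps ord0 j = q j i * ps ord0 i.

Definition two_state (ps : 'rV[R]_n) (i j : 'I_n) : 'M[R]_n :=
  \matrix_(a < n, b < n)
    if (a == j) && (b == i) then (ps ord0 i)^-1
    else if (a == i) && (b == j) then (ps ord0 j)^-1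
    else 0.

Definition gamma (j i : 'I_n) : 'rV[R]_n :=
  \row_k ((k == i)%:R - (k == j)%:R).

Definition is_distr (p : 'rV[R]_n) : Prop :=
  (forall i, 0 <= p ord0 i) /\ \sum_(i < n) p ord0 i = 1.

Definition pos_distr (p : 'rV[R]_n) : Prop :=
  (forall i, 0 < p ord0 i) /\ \sum_(i < n) p ord0 i = 1.

Definition in_Qcone (p ps : 'rV[R]_n) (v : 'rV[R]_n) : Prop :=
  exists c : 'M[R]_n, (forall a b, 0 <= c a b) /\
    v = \sum_(i < n) \sum_(j < n | (j < i)%N)
          c j i *: (Num.sg (p ord0 j / ps ord0 j - p ord0 i / ps ord0 i) *: gamma j i).

End Defs.
Arguments gamma {R n}.

From HB Require Import structures.
From mathcomp Require Import all_boot all_order all_algebra.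
From mathcomp Require Import ring.
Set Implicit Arguments. Unset Strict Implicit. Unset Printing Implicit Defensive.
Import Order.TTheory GRing.Theory Num.Theory.
Local Open Scope ring_scope.

(* Put x_i = p_i / pstar_i and W_ij = q_ij pstar_j (the equilibrium fluxes).
   The equilibrium condition says exactly that W is balanced (row sums equal
   column sums), and then the velocity is v_i = sum_j W_ij (x_j - x_i).  The
   heart of the proof (velocity_downhill) is: for a balanced W, nonnegative
   off the diagonal, v is the net inflow of a nonnegative flow moving mass
   only from states with larger x to states with strictly smaller x.  It is
   proved by induction on the number of non-maximal states: cutting x at its
   second highest level t writes v as the velocity of min(x, t), handled by
   induction, plus the velocity of x - min(x, t), a zero-sum vector that is
   positive below the cut and negative above it, hence a downhill flow.
   A downhill flow C yields coefficients c_ji = (C_ij + C_ji) / |x_j - x_i|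
   with C_ij - C_ji = c_ji (x_j - x_i), and expanding the net flow over pairs
   (pair_expansion) gives v = sum_{j<i} c_ji (x_j - x_i) gamma^{ji}, each
   term being c_ji times the velocity of a two-state chain.  Conversely such
   a combination is the velocity of a chain with detailed balance, whose
   velocity lies in the cone Q(P, Pstar), and every point of that cone is
   such a combination; this closes the cycle of equivalences. *)

Section Truncation.
Variable R : realFieldType.

Lemma sub_min_ge0 (t u : R) : 0 <= u - Num.min u t.
Proof. by rewrite subr_ge0 ge_min lexx. Qed.

Lemma sub_min_gt0 (t u : R) : 0 < u - Num.min u t -> t < u.
Proof. by case: (leP u t) => // _; rewrite subrr ltxx. Qed.

Lemma sub_min_mono (t u v : R) : u <= v -> u - Num.min u t <= v - Num.min v t.
Proof.
move=> uv; case: (leP u t) => ut; case: (leP v t) => vt; rewrite ?subrr ?lerB //.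
- by rewrite subr_ge0 ltW.
- by move: (lt_le_trans ut (le_trans uv vt)); rewrite ltxx.
Qed.

Lemma min_lt_cut (t u v : R) : Num.min u t < Num.min v t -> u < v.
Proof.
case: (leP u t) => ut; case: (leP v t) => vt //.
- by move/lt_trans; apply.
- by rewrite ltNge vt.
- by rewrite ltxx.
Qed.

End Truncation.

(* Flows on a finite set of states I.  A flow C moves the amount C a b from
   state b into state a. *)
Section Flows.
Variables (R : realFieldType) (I : finType).
Implicit Types (x y h v : I -> R) (C W : I -> I -> R).

Definition netflow C (i : I) : R := \sum_b C i b - \sum_a C a i.

Lemma eq_netflow C D i : (forall a b, C a b = D a b) -> netflow C i = netflow D i.
Proof. by move=> CD; rewrite /netflow; congr (_ - _); apply: eq_bigr. Qed.

Lemma netflowD C D i :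
  netflow (fun a b => C a b + D a b) i = netflow C i + netflow D i.
Proof. by rewrite /netflow !big_split /=; ring. Qed.

Lemma netflow_single (a0 b0 : I) (c : R) i :
  netflow (fun a b => ((a == a0) && (b == b0))%:R * c) i
  = ((i == a0)%:R - (i == b0)%:R) * c.
Proof.
rewrite /netflow (bigD1 b0) // [X in _ - X](bigD1 a0) //= !eqxx andbT !big1 ?addr0.
- by rewrite mulrBl.
- by move=> a /negPf ->; rewrite mul0r.
- by move=> b /negPf ->; rewrite andbF mul0r.
Qed.

Definition downhill x v : Prop :=
  exists C, [/\ forall a b, 0 <= C a b,
                forall a b, x b <= x a -> C a b = 0 &
                forall i, v i = netflow C i].

Lemma downhill_refine x y v :
  (forall a b, y a < y b -> x a < x b) -> downhill y v -> downhill x v.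
Proof.
move=> yx [C [C0 Cdown vE]]; exists C; split=> // a b xba.
by apply: Cdown; rewrite leNgt; apply: contraTN xba => /yx; rewrite -ltNge.
Qed.

Lemma downhillD x u w v :
  (forall i, v i = u i + w i) -> downhill x u -> downhill x w -> downhill x v.
Proof.
move=> vE [C [C0 Cdown uE]] [D [D0 Ddown wE]].
exists (fun a b => C a b + D a b); split.
- by move=> a b; rewrite addr_ge0.
- by move=> a b xba; rewrite Cdown ?Ddown ?addr0.
- by move=> i; rewrite vE uE wE netflowD.
Qed.

(* A zero-sum vector whose positive entries all lie strictly below its
   negative entries is a downhill net flow: send h a * (- h b) / T from each
   negative b to each positive a, T being the total positive mass. *)
Lemma zero_sum_downhill x h : \sum_i h i = 0 ->
  (forall a b, 0 < h a -> h b < 0 -> x a < x b) -> downhill x h.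
Proof.
move=> h_sum hx.
pose hp a := if 0 < h a then h a else 0.
pose hn a := if 0 < h a then 0 else - h a.
have hE a : h a = hp a - hn a by rewrite /hp /hn; case: ifP; rewrite ?subr0 ?sub0r ?opprK.
have hp_ge0 a : 0 <= hp a by rewrite /hp; case: ifP => // /ltW.
have hn_ge0 a : 0 <= hn a by rewrite /hn; case: ifP => // /negbT; rewrite -leNgt oppr_ge0.
pose T := \sum_a hp a.
have hnT : \sum_a hn a = T.
  move: h_sum; under eq_bigr do rewrite hE.
  by rewrite sumrB => /eqP; rewrite subr_eq0 => /eqP.
have [T0|Tn0] := eqVneq T 0.
  have h0 i : h i = 0.
    by rewrite hE (psumr_eq0P _ T0) ?(psumr_eq0P _ (etrans hnT T0)) ?subr0.
  by exists (fun _ _ => 0); split=> // i; rewrite h0 /netflow !big1 ?subr0.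
exists (fun a b => hp a * hn b / T); split.
- by move=> a b; rewrite divr_ge0 ?mulr_ge0 // sumr_ge0.
- move=> a b xba; rewrite /hp /hn; case: ltP => ha; rewrite ?mul0r //.
  case: ltP => hb; rewrite ?mulr0 ?mul0r //.
  rewrite le_eqVlt in hb; case/orP: hb => [/eqP->|hb]; first by rewrite oppr0 mulr0 mul0r.
  by move: (hx a b ha hb); rewrite ltNge xba.
- move=> i; rewrite /netflow -!mulr_suml -mulr_sumr hnT -/T hE.
  by rewrite mulfK // [T * _]mulrC mulfK.
Qed.

Lemma downhill_pair_coef x C : (forall a b, x b <= x a -> C a b = 0) ->
  forall i j, C i j - C j i = (C i j + C j i) / `|x j - x i| * (x j - x i).
Proof.
move=> C_down i j; case: (ltgtP (x i) (x j)) => xij.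
- rewrite (C_down j i (ltW xij)) addr0 subr0 gtr0_norm ?subr_gt0 // divfK //.
  by rewrite subr_eq0 gt_eqF.
- rewrite (C_down i j (ltW xij)) !add0r ltr0_norm ?subr_lt0 //.
  by rewrite invrN mulrN mulNr divfK // subr_eq0 lt_eqF.
- by rewrite (C_down i j) ?(C_down j i) ?xij // !subrr mulr0.
Qed.

Definition velocity W y (i : I) : R := \sum_j W i j * (y j - y i).

Definition nontop y (a : I) : bool := [exists j, y a < y j].

Lemma nontopPn y a : ~~ nontop y a -> forall j, y j <= y a.
Proof. by move/existsPn=> ya j; rewrite leNgt ya. Qed.

Section Balanced.
Variable W : I -> I -> R.
Hypothesis W_ge0 : forall i j, i != j -> 0 <= W i j.
Hypothesis W_bal : forall i, \sum_j W i j = \sum_j W j i.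

Lemma velocityB y z i :
  velocity W y i = velocity W z i + velocity W (fun j => y j - z j) i.
Proof. by rewrite /velocity -big_split; apply: eq_bigr => j _ /=; ring. Qed.

(* Balance means that the kinetics conserves total mass. *)
Lemma velocity_sum0 y : \sum_i velocity W y i = 0.
Proof.
rewrite /velocity; under eq_bigr do under eq_bigr do rewrite mulrBr.
under eq_bigr do rewrite sumrB.
rewrite sumrB exchange_big /=; apply/eqP; rewrite subr_eq0; apply/eqP.
by apply: eq_bigr => i _; rewrite -!mulr_suml W_bal.
Qed.

Lemma velocity_ge0 y i : (forall j, y i <= y j) -> 0 <= velocity W y i.
Proof.
move=> ymin; apply: sumr_ge0 => j _.
have [->|ji] := eqVneq j i; first by rewrite subrr mulr0.
by rewrite mulr_ge0 ?W_ge0 1?eq_sym // subr_ge0.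
Qed.

Lemma velocity_le0 y i : (forall j, y j <= y i) -> velocity W y i <= 0.
Proof.
move=> ymax; rewrite -oppr_ge0 -sumrN; apply: sumr_ge0 => j _.
have [->|ji] := eqVneq j i; first by rewrite subrr mulr0 oppr0.
by rewrite -mulrN mulr_ge0 ?W_ge0 1?eq_sym // oppr_ge0 subr_le0.
Qed.

Lemma velocity_cut x y :
  (forall a b, nontop y a -> [exists j, y j < y b] -> x a < x b) ->
  downhill x (velocity W y).
Proof.
move=> yx; apply: zero_sum_downhill; first exact: velocity_sum0.
move=> a b va vb; apply: yx.
  by apply: contraTT va => /nontopPn/velocity_le0; rewrite leNgt.
apply: contraTT vb => /existsPn ymin; rewrite -leNgt; apply: velocity_ge0 => j.
by rewrite leNgt ymin.
Qed.

(* Induction on the number of non-maximal states; t is the highest value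
   below the maximum, and x = min(x, t) + (x - min(x, t)). *)
Lemma velocity_downhill x : downhill x (velocity W x).
Proof.
have [N] := ubnP #|[set a | nontop x a]|; elim: N x => // N IH x card_low.
have [low0|[i0]] := set_0Vmem [set a | nontop x a]; last rewrite inE => i0_low.
  apply: velocity_cut => a b a_low.
  by move: low0 => /setP/(_ a); rewrite !inE a_low.
have [m m_low low_le] := arg_maxP x i0_low.
pose t := x m; pose x' i := Num.min (x i) t.
have x'_refine a b : x' a < x' b -> x a < x b by exact: min_lt_cut.
have low'_proper : [set a | nontop x' a] \proper [set a | nontop x a].
  apply/properP; split.
    apply/subsetP => a; rewrite !inE => /existsP[j /x'_refine xaj].
    by apply/existsP; exists j.
  exists m; rewrite !inE //; apply/existsP => -[j].
  by rewrite /x' minxx lt_min ltxx andbF.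
apply: (downhillD (velocityB x x')).
  apply: downhill_refine x'_refine _; apply: IH.
  exact: leq_trans (proper_card low'_proper) card_low.
apply: velocity_cut => a b /existsP[j daj] /existsP[k dkb].
have a_low : nontop x a.
  apply/existsP; exists j; rewrite ltNge; apply: contraTN daj.
  by move=> /(sub_min_mono t); rewrite -leNgt.
have t_lt_b : t < x b.
  by apply: sub_min_gt0; apply: le_lt_trans dkb; apply: sub_min_ge0.
exact: le_lt_trans (low_le a a_low) t_lt_b.
Qed.

End Balanced.
End Flows.

Section Pairs.
Variables (R : realFieldType) (n : nat).

Lemma gammaE (j i k : 'I_n) : gamma j i ord0 k = (k == i)%:R - (k == j)%:R :> R.
Proof. by rewrite mxE. Qed.

Lemma gamma_swap (i j : 'I_n) : gamma i j = - gamma j i :> 'rV[R]_n.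
Proof. by apply/rowP => k; rewrite !mxE opprB. Qed.

Lemma sum_indicator (k : 'I_n) (F : 'I_n -> R) : \sum_i F i * (k == i)%:R = F k.
Proof.
rewrite (bigD1 k) //= eqxx mulr1 big1 ?addr0 // => i /negPf ik.
by rewrite eq_sym ik mulr0.
Qed.

Lemma netflow_gamma (F : 'I_n -> 'I_n -> R) :
  \row_k netflow F k = \sum_i \sum_j F i j *: gamma j i.
Proof.
apply/rowP => k; rewrite summxE; under eq_bigr do rewrite summxE.
rewrite mxE /netflow.
under eq_bigr do under eq_bigr do rewrite mxE gammaE mulrBr.
under eq_bigr do rewrite sumrB.
rewrite sumrB exchange_big /=.
by congr (_ - _); apply: eq_bigr => j _; rewrite sum_indicator.
Qed.

Lemma gamma_diag (i : 'I_n) : gamma i i = 0 :> 'rV[R]_n.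
Proof. by apply/rowP => k; rewrite !mxE subrr. Qed.

(* Grouping each transfer with its reverse: only the pairs j < i remain. *)
Lemma pair_expansion (F : 'I_n -> 'I_n -> R) :
  \row_k netflow F k = \sum_(i < n) \sum_(j < n | (j < i)%N) (F i j - F j i) *: gamma j i.
Proof.
have split_row (i : 'I_n) : \sum_j F i j *: gamma j i
    = \sum_(j < n | (j < i)%N) F i j *: gamma j i
      + \sum_(j < n | (i < j)%N) F i j *: gamma j i.
  rewrite (bigID (fun j : 'I_n => (j < i)%N)) /=; congr (_ + _).
  rewrite (bigD1 i) ?ltnn //= gamma_diag scaler0 add0r; apply: eq_bigl => j.
  by rewrite -leqNgt ltn_neqAle andbC eq_sym.
rewrite netflow_gamma (eq_bigr _ (fun i _ => split_row i)) big_split /=.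
rewrite [X in _ + X](exchange_big_dep predT) //= -big_split /=.
apply: eq_bigr => i _; rewrite [RHS](eq_bigr _ (fun j _ => scalerBl _ _ _)) sumrB -sumrN.
by congr (_ + _); apply: eq_bigr => j _; rewrite gamma_swap scalerN.
Qed.

Lemma kolm_netflow (q : 'M[R]_n) (p : 'rV[R]_n) :
  kolm q p = \row_k netflow (fun a b => q a b * p ord0 b) k.
Proof.
apply/rowP => k; rewrite !mxE /netflow.
rewrite [X in _ = X - _](bigD1 k) // [X in _ = _ - X](bigD1 k) //=.
by rewrite sumrB -mulr_suml; ring.
Qed.

Lemma kolm_pairs (q : 'M[R]_n) (p : 'rV[R]_n) :
  kolm q p = \sum_(i < n) \sum_(j < n | (j < i)%N)
               (q i j * p ord0 j - q j i * p ord0 i) *: gamma j i.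
Proof. by rewrite kolm_netflow pair_expansion. Qed.

Lemma two_state_flux (ps p : 'rV[R]_n) (i j a b : 'I_n) : i != j ->
  two_state ps i j a b * p ord0 b
  = ((a == j) && (b == i))%:R * (p ord0 i / ps ord0 i)
    + ((a == i) && (b == j))%:R * (p ord0 j / ps ord0 j).
Proof.
move=> ij; rewrite mxE; case: ifP => [/andP[_ /eqP->]|_].
  by rewrite (negPf ij) andbF mul1r mul0r addr0 mulrC.
case: ifP => [/andP[_ /eqP->]|_].
  by rewrite mul0r add0r mul1r mulrC.
by rewrite !mul0r addr0.
Qed.

Lemma kolm_two_state (ps p : 'rV[R]_n) (i j : 'I_n) : i != j ->
  kolm (two_state ps i j) p = (p ord0 j / ps ord0 j - p ord0 i / ps ord0 i) *: gamma j i.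
Proof.
move=> ij; apply/rowP => k; rewrite kolm_netflow !mxE.
rewrite (eq_netflow _ (fun a b => two_state_flux ps p a b ij)).
by rewrite netflowD !netflow_single; ring.
Qed.

End Pairs.

Section Equilibrium.
Variables (R : realFieldType) (n : nat) (ps p0 : 'rV[R]_n).
Hypothesis ps_pos : forall i, 0 < ps ord0 i.

Let x (i : 'I_n) : R := p0 ord0 i / ps ord0 i.

Lemma p0_ratio i : p0 ord0 i = ps ord0 i * x i.
Proof. by rewrite /x mulrC divfK // gt_eqF. Qed.

Lemma equil_balance (q : 'M[R]_n) : has_equil q ps ->
  forall i, \sum_j q i j * ps ord0 j = \sum_j q j i * ps ord0 i.
Proof. by move=> qeq i; rewrite (bigD1 i) //= [RHS](bigD1 i) //= qeq mulr_suml. Qed.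

Lemma kolm_velocity (q : 'M[R]_n) : has_equil q ps ->
  forall i, kolm q p0 ord0 i = velocity (fun a b => q a b * ps ord0 b) x i.
Proof.
move=> qeq i; rewrite kolm_netflow mxE /netflow /velocity /=.
rewrite [RHS](eq_bigr _ (fun j _ => mulrBr _ _ _)) sumrB -[X in _ = _ - X]mulr_suml.
rewrite equil_balance //.
by rewrite mulr_suml; congr (_ - _); apply: eq_bigr => j _; rewrite p0_ratio mulrA.
Qed.

Lemma chain_downhill (q : 'M[R]_n) : is_rates q -> has_equil q ps ->
  downhill x (fun i => kolm q p0 ord0 i).
Proof.
move=> qrates qeq.
have W_ge0 a b : a != b -> 0 <= q a b * ps ord0 b.
  by move=> ab; rewrite mulr_ge0 ?qrates ?ltW.
have [C [C_ge0 C_down vE]] := velocity_downhill W_ge0 (equil_balance qeq) x.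
by exists C; split=> // i; rewrite kolm_velocity.
Qed.

Lemma chain_pair_combination (q : 'M[R]_n) : is_rates q -> has_equil q ps ->
  exists c : 'M[R]_n, (forall a b, 0 <= c a b) /\
    kolm q p0 = \sum_(i < n) \sum_(j < n | (j < i)%N) c j i *: ((x j - x i) *: gamma j i).
Proof.
move=> qrates qeq; have [C [C_ge0 C_down kE]] := chain_downhill qrates qeq.
exists (\matrix_(a, b) ((C b a + C a b) / `|x a - x b|)); split.
  by move=> a b; rewrite mxE divr_ge0 ?addr_ge0.
have -> : kolm q p0 = \row_k netflow C k by apply/rowP => k; rewrite mxE kE.
rewrite pair_expansion; apply: eq_bigr => i _; apply: eq_bigr => j _.
by rewrite scalerA mxE -downhill_pair_coef.
Qed.

(* Every such combination is the velocity of a chain with detailed balance,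
   whose symmetric equilibrium fluxes are s i j = s j i = c j i for j < i. *)
Lemma pair_combination_db (c : 'M[R]_n) (v : 'rV[R]_n) : (forall a b, 0 <= c a b) ->
  v = \sum_(i < n) \sum_(j < n | (j < i)%N) c j i *: ((x j - x i) *: gamma j i) ->
  exists q : 'M[R]_n,
    is_rates q /\ has_equil q ps /\ detailed_balance q ps /\ v = kolm q p0.
Proof.
move=> c_ge0 ->.
pose s (a b : 'I_n) := if (b < a)%N then c b a else c a b.
have s_sym a b : s a b = s b a.
  by rewrite /s; case: ltngtP => // /val_inj ->.
pose q := \matrix_(a, b) (s a b / ps ord0 b).
have qE a b : q a b * ps ord0 b = s a b by rewrite mxE divfK // gt_eqF.
exists q; split; [|split; [|split]].
- by move=> a b _; rewrite mxE; apply: divr_ge0; [rewrite /s; case: ifP | exact: ltW].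
- move=> i; rewrite mulr_suml; apply: eq_bigr => j _; by rewrite qE s_sym -qE.
- by move=> i j _; rewrite !qE s_sym.
rewrite kolm_pairs; apply: eq_bigr => i _; apply: eq_bigr => j ji.
rewrite scalerA !p0_ratio !mulrA !qE (s_sym j i) /s ji /x; congr (_ *: _); ring.
Qed.

Lemma db_in_Qcone (q : 'M[R]_n) : is_rates q -> detailed_balance q ps ->
  in_Qcone p0 ps (kolm q p0).
Proof.
move=> qrates qdb.
exists (\matrix_(a, b) (q b a * ps ord0 a * `|x a - x b|)); split.
  move=> a b; rewrite mxE; have [->|ab] := eqVneq a b; first by rewrite subrr normr0 mulr0.
  by apply: mulr_ge0 => //; apply: mulr_ge0; [apply: qrates; rewrite eq_sym | exact: ltW].
rewrite kolm_pairs; apply: eq_bigr => i _; apply: eq_bigr => j ji.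
have ij : i != j by rewrite neq_ltn ji orbT.
rewrite scalerA mxE -/(x j) -/(x i) !p0_ratio [q j i * _]mulrA -(qdb i j ij).
by rewrite mulrA -mulrBr -mulrA [`|_| * _]mulrC -numEsg.
Qed.

Lemma Qcone_pair_combination (v : 'rV[R]_n) : in_Qcone p0 ps v ->
  exists c : 'M[R]_n, (forall a b, 0 <= c a b) /\
    v = \sum_(i < n) \sum_(j < n | (j < i)%N) c j i *: ((x j - x i) *: gamma j i).
Proof.
move=> [c [c_ge0 ->]]; exists (\matrix_(a, b) (c a b / `|x a - x b|)); split.
  by move=> a b; rewrite mxE divr_ge0.
apply: eq_bigr => i _; apply: eq_bigr => j _; rewrite !scalerA mxE; congr (_ *: _).
rewrite -/(x j) -/(x i).
have [->|xji] := eqVneq (x j - x i) 0; first by rewrite sgr0 !mulr0.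
rewrite -mulrA; congr (_ * _).
by rewrite [X in _ = _ * X]numEsg mulrCA mulVf ?mulr1 // normr_eq0.
Qed.

End Equilibrium.

Theorem mainTheorem9 (R : realFieldType) (n : nat) (hn : (1 < n)%N)
    (ps : 'rV[R]_n) (hps : pos_distr ps) :
  (forall (q : 'M[R]_n) (p0 : 'rV[R]_n),
      is_rates q -> has_equil q ps -> is_distr p0 ->
      exists c : 'M[R]_n, (forall a b, 0 <= c a b) /\
        kolm q p0 = \sum_(i < n) \sum_(j < n | (j < i)%N)
                       c j i *: kolm (two_state ps i j) p0 /\
        kolm q p0 = \sum_(i < n) \sum_(j < n | (j < i)%N)
                       c j i *: ((p0 ord0 j / ps ord0 j - p0 ord0 i / ps ord0 i) *: gamma j i))
  /\
  (forall p0 : 'rV[R]_n, is_distr p0 -> forall v : 'rV[R]_n,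
      ((exists q : 'M[R]_n, is_rates q /\ has_equil q ps /\ v = kolm q p0) <->
       (exists q : 'M[R]_n, is_rates q /\ has_equil q ps /\ detailed_balance q ps /\ v = kolm q p0))
      /\
      ((exists q : 'M[R]_n, is_rates q /\ has_equil q ps /\ detailed_balance q ps /\ v = kolm q p0) <->
       in_Qcone p0 ps v)).
Proof.
have [ps_pos _] := hps.
split=> [q p0 qrates qeq _ | p0 _ v].
  have [c [c_ge0 kE]] := chain_pair_combination p0 ps_pos qrates qeq.
  exists c; split=> //; split=> //; rewrite kE.
  apply: eq_bigr => i _; apply: eq_bigr => j ji.
  by rewrite kolm_two_state // neq_ltn ji orbT.
split; split.
- move=> [q [qrates [qeq ->]]].
  have [c [c_ge0 kE]] := chain_pair_combination p0 ps_pos qrates qeq.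
  exact (pair_combination_db ps_pos c_ge0 kE).
- by move=> [q [qrates [qeq [_ ->]]]]; exists q.
- by move=> [q [qrates [_ [qdb ->]]]]; apply: db_in_Qcone.
- move=> /Qcone_pair_combination [c [c_ge0 vE]].
  exact (pair_combination_db ps_pos c_ge0 vE).
Qed.
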